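(* Let $\Omega$ be either the bidisk $\mathbb{D}^2$ or the unit ball $\mathbb{B}_2$ in $\mathbb{C}^2$, and let $\Phi(z_1,z_2)=(z_1^2+z_2^2,\ z_1^2z_2^2)$. Then $\Phi(\Omega)$ is open and $\Phi$ is a holomorphic proper map from $\Omega$ onto $\Phi(\Omega)$.
   Context: A holomorphic map $\Phi:\Omega\to\Omega'$ between domains is proper if $\Phi^{-1}(K)$ is compact for every compact $K\subseteq\Omega'$. *)

(* C := R[i] for R : realType (the complex numbers),
   C^2 := C * C with its product (max-norm) normed C-module structure. *)
From HB Require Import structures.
From mathcomp Require Import all_boot all_order all_algebra.
From mathcomp Require Import complex.
From mathcomp Require Import all_classical all_reals all_analysis.
Export numFieldNormedType.Exports.
Unset Printing Implicit Defensive.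
Import Order.TTheory GRing.Theory Num.Theory.
Local Open Scope classical_set_scope.
Local Open Scope ring_scope.

Definition Cplx (R : realType) : numClosedFieldType := R[i].

Definition bidisk (R : realType) : set (Cplx R * Cplx R) :=
  [set z | `|z.1| < 1 /\ `|z.2| < 1].

Definition unit_ball2 (R : realType) : set (Cplx R * Cplx R) :=
  [set z | `|z.1| ^+ 2 + `|z.2| ^+ 2 < 1].

Definition Phi (R : realType) (z : Cplx R * Cplx R) : Cplx R * Cplx R :=
  (z.1 ^+ 2 + z.2 ^+ 2, z.1 ^+ 2 * z.2 ^+ 2).

(* Holomorphic on an open set: complex (C-linear) Frechet differentiable at every point.
   [differentiable] uses linear maps over the scalar field C = Cplx R. *)
Definition holomorphic_on (R : realType) (U : set (Cplx R * Cplx R))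
    (f : Cplx R * Cplx R -> Cplx R * Cplx R) : Prop :=
  forall z, U z -> differentiable f z.

Definition proper_map (R : realType) (U V : set (Cplx R * Cplx R))
    (f : Cplx R * Cplx R -> Cplx R * Cplx R) : Prop :=
  (forall z, U z -> V (f z)) /\
  (forall K, K `<=` V -> compact K -> compact (U `&` f @^-1` K)).

(** Write [Phi = sigma \o sq] with [sq (z1, z2) = (z1^2, z2^2)] and
    [sigma (a, b) = (a + b, a b)].  Both factors are open maps: a point close
    to [(a0 + b0, a0 b0)] is [sigma (a, b)] for the two roots [a, b] of a
    quadratic, and since [|a0 - a| |a0 - b|] is small one of them is close to
    [a0]; likewise one of the two square roots of a point close to [w^2] is
    close to [w].  Hence [Phi] is open and so is [Phi(Omega)].
    For properness, [Phi z = Phi w] forces [{z1^2, z2^2} = {w1^2, w2^2}], so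
    [(|z1|, |z2|)] is a permutation of [(|w1|, |w2|)].  Both domains are
    described symmetrically by these moduli, so [Omega = Phi^-1 (Phi Omega)]:
    the preimage of a compact [K] in [Phi(Omega)] is closed and contained in
    [Omega], which lies in the compact closed square [[-1, 1]^2 x [-1, 1]^2]. *)
From HB Require Import structures.
From mathcomp Require Import all_boot all_order all_algebra.
From mathcomp Require Import complex.
From mathcomp Require Import all_classical all_reals all_analysis.
From mathcomp Require Import ring.
Import numFieldNormedType.Exports.
Import Order.TTheory GRing.Theory Num.Theory.
Local Open Scope classical_set_scope.
Local Open Scope ring_scope.

Lemma normM_lt_sqr (K : numDomainType) (x y e : K) : 0 < e ->
  `|x| * `|y| < e ^+ 2 -> `|x| < e \/ `|y| < e.
Proof.
move=> e0 hxy.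
have [hx|hx] := real_ltP (normr_real x) (gtr0_real e0); first by left.
have [hy|hy] := real_ltP (normr_real y) (gtr0_real e0); first by right.
have : e ^+ 2 <= `|x| * `|y| by rewrite expr2; apply: ler_pM => //; apply: ltW.
by move/(lt_le_trans hxy); rewrite ltxx.
Qed.

Lemma vieta_pair_eq (K : idomainType) (a b a0 b0 : K) :
  a + b = a0 + b0 -> a * b = a0 * b0 ->
  (a = a0 /\ b = b0) \/ (a = b0 /\ b = a0).
Proof.
move=> hs hp.
have : (a0 - a) * (a0 - b) = 0.
  have -> : (a0 - a) * (a0 - b) = a0 ^+ 2 - a0 * (a + b) + a * b by ring.
  by rewrite hs hp; ring.
move/eqP; rewrite mulf_eq0 !subr_eq0 => /orP[/eqP ea|/eqP eb].
  by subst a0; left; split => //; apply: (addrI a).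
by subst a0; right; split => //; apply: (addIr b); rewrite hs addrC.
Qed.

Section ComplexOpenness.
Variable K : numClosedFieldType.

Lemma exists_sqrt_near (x w e : K) : 0 < e ->
  `|x - w ^+ 2| < e ^+ 2 -> exists y, y ^+ 2 = x /\ `|y - w| < e.
Proof.
move=> e0 hx; set c := sqrtC x.
have c2 : c ^+ 2 = x by rewrite sqrtCK.
have : `|c - w| * `|- c - w| < e ^+ 2.
  rewrite -normrM.
  have -> : (c - w) * (- c - w) = - (c ^+ 2 - w ^+ 2) by ring.
  by rewrite normrN c2.
by case/normM_lt_sqr => // hc; [exists c | exists (- c); rewrite sqrrN].
Qed.

Lemma exists_vieta_pair (s p : K) : exists a b, a + b = s /\ a * b = p.
Proof.
set r := sqrtC (s ^+ 2 - 4 * p).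
have r2 : r ^+ 2 = s ^+ 2 - 4 * p by rewrite sqrtCK.
have n2 : (2 : K) != 0 by rewrite pnatr_eq0.
have n4 : (4 : K) != 0 by rewrite pnatr_eq0.
exists ((s + r) / 2), (s - (s + r) / 2); split; first ring.
have -> : (s + r) / 2 * (s - (s + r) / 2) = (s ^+ 2 - r ^+ 2) / 4 by field.
by rewrite r2; field.
Qed.

Lemma exists_vieta_pair_near (a0 b0 s p eta d : K) : 0 < eta ->
  d * (`|a0| + 1) <= eta ^+ 2 ->
  `|s - (a0 + b0)| < d -> `|p - a0 * b0| < d ->
  exists a b, [/\ a + b = s, a * b = p, `|a - a0| < eta & `|b - b0| < d + eta].
Proof.
move=> eta0 hd hs0 hp0.
have [a [b [hs hp]]] := exists_vieta_pair s p.
have other_near x y : x + y = s -> `|a0 - x| < eta -> `|y - b0| < d + eta.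
  move=> hxy hx.
  have -> : y - b0 = (s - (a0 + b0)) + (a0 - x) by rewrite -hxy; ring.
  by apply: (le_lt_trans (ler_normD _ _)); apply: ltr_leD => //; apply: ltW.
have : `|a0 - a| * `|a0 - b| < eta ^+ 2.
  rewrite -normrM.
  have -> : (a0 - a) * (a0 - b) = (a0 + b0 - s) * a0 + (p - a0 * b0).
    by rewrite -hs -hp; ring.
  apply: (le_lt_trans (ler_normD _ _)); rewrite normrM.
  apply: (lt_le_trans _ hd); rewrite mulrDr mulr1; apply: ler_ltD => //.
  by apply: ler_wpM2r => //; rewrite distrC; apply: ltW.
case/normM_lt_sqr => // near_a0.
  exists a, b; split => //; first by rewrite distrC.
  exact: (other_near a b).
exists b, a; split; [by rewrite addrC | by rewrite mulrC | by rewrite distrC |].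
by apply: (other_near b a) => //; rewrite addrC.
Qed.

Lemma sqr_vieta_locally_onto (w1 w2 eps : K) : 0 < eps ->
  exists2 d : K, 0 < d & forall s p : K,
    `|s - (w1 ^+ 2 + w2 ^+ 2)| < d -> `|p - w1 ^+ 2 * w2 ^+ 2| < d ->
    exists y1 y2 : K, [/\ y1 ^+ 2 + y2 ^+ 2 = s, y1 ^+ 2 * y2 ^+ 2 = p,
       `|y1 - w1| < eps & `|y2 - w2| < eps].
Proof.
move=> eps0; set a0 := w1 ^+ 2; set b0 := w2 ^+ 2.
set eta := eps ^+ 2 / 2.
have eta0 : 0 < eta by rewrite divr_gt0 // exprn_gt0.
have etaD : eta + eta = eps ^+ 2 by rewrite /eta; field.
set M := `|a0| + 1 + eta.
have M0 : 0 < M by rewrite /M addr_gt0 // ltr_wpDl.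
set d := eta ^+ 2 / M.
have d0 : 0 < d by rewrite divr_gt0 // exprn_gt0.
have dM : d * M = eta ^+ 2 by rewrite /d divfK // gt_eqF.
have hd : d * (`|a0| + 1) <= eta ^+ 2.
  by rewrite -dM; apply: ler_wpM2l; [apply: ltW | rewrite /M lerDl ltW].
have d_le_eta : d <= eta.
  rewrite -(ler_pM2r M0) dM expr2; apply: ler_wpM2l; first exact: ltW.
  by rewrite /M lerDr addr_ge0.
exists d => // s p hs hp.
have [a [b [<- <- ha hb]]] := exists_vieta_pair_near _ _ _ _ _ _ eta0 hd hs hp.
have [y1 [<- y1w]] : exists y1, y1 ^+ 2 = a /\ `|y1 - w1| < eps.
  by apply: exists_sqrt_near => //; apply: (lt_trans ha); rewrite -etaD ltrDr.
have [y2 [<- y2w]] : exists y2, y2 ^+ 2 = b /\ `|y2 - w2| < eps.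
  by apply: exists_sqrt_near => //; apply: (lt_le_trans hb); rewrite -etaD lerD2r.
by exists y1, y2.
Qed.

End ComplexOpenness.

Section Phi.
Variable R : realType.
Local Notation C := (Cplx R).

Lemma Phi_differentiable (z : C * C) : differentiable (Phi R) z.
Proof.
have d1 : differentiable (@fst C C) z.
  by apply: linear_differentiable => x; apply: cvg_fst.
have d2 : differentiable (@snd C C) z.
  by apply: linear_differentiable => x; apply: cvg_snd.
apply: differentiable_pair.
  have -> : (fun y : C * C => y.1 ^+ 2 + y.2 ^+ 2) = fst ^+ 2 + snd ^+ 2 by [].
  by apply: differentiableD; apply: differentiableX.
have -> : (fun y : C * C => y.1 ^+ 2 * y.2 ^+ 2) = fst ^+ 2 * snd ^+ 2 by [].
by apply: differentiableM; apply: differentiableX.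
Qed.

Lemma Phi_continuous : continuous (Phi R).
Proof. by move=> z; apply: differentiable_continuous; apply: Phi_differentiable. Qed.

Lemma ball_prodE (w z : C * C) (e : C) :
  ball w e z <-> `|w.1 - z.1| < e /\ `|w.2 - z.2| < e.
Proof. by []. Qed.

Lemma open_Phi_image (U : set (C * C)) : open U -> open (Phi R @` U).
Proof.
rewrite !openE => Uopen _ [w Uw <-].
have /nbhs_ballP[eps eps0 wU] := Uopen w Uw.
have [d d0 onto] := sqr_vieta_locally_onto _ w.1 w.2 eps eps0.
apply/nbhs_ballP; exists d => //= k /ball_prodE[k1 k2].
rewrite distrC in k1; rewrite distrC in k2.
have [y1 [y2 [ys yp y1w y2w]]] := onto k.1 k.2 k1 k2.
exists (y1, y2); last by rewrite /Phi /= ys yp -surjective_pairing.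
by apply: wU; apply/ball_prodE; rewrite /= !(distrC w.1) !(distrC w.2).
Qed.

Lemma Phi_eq_norm (z w : C * C) : Phi R z = Phi R w ->
  (`|z.1| = `|w.1| /\ `|z.2| = `|w.2|) \/ (`|z.1| = `|w.2| /\ `|z.2| = `|w.1|).
Proof.
have normP (x y : C) : x ^+ 2 = y ^+ 2 -> `|x| = `|y|.
  by move=> xy; apply: (@pexpIrn _ 2); rewrite ?nnegrE // -!normrX xy.
by case=> /vieta_pair_eq /[apply] -[] [/normP -> /normP ->]; [left | right].
Qed.

Lemma bidisk_open : open (bidisk R).
Proof.
have -> : bidisk R = ball (0 : C * C) 1.
  by apply/funext => z; apply/propext; rewrite ball_prodE /= !sub0r !normrN.
exact: ball_open.
Qed.

Lemma unit_ball2_open : open (unit_ball2 R).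
Proof.
pose f (z : C * C) : C := `|z.1| * `|z.1| + `|z.2| * `|z.2|.
have -> : unit_ball2 R = f @^-1` ball (0 : C) 1.
  apply/funext => z; apply/propext; rewrite /ball /= sub0r normrN.
  by rewrite ger0_norm ?addr_ge0 ?mulr_ge0 // /f -!expr2.
apply: open_comp; last exact: ball_open.
by move=> z _; apply: cvgD; apply: cvgM; apply: cvg_norm;
  [exact: cvg_fst | exact: cvg_fst | exact: cvg_snd | exact: cvg_snd].
Qed.

Lemma unit_ball2_sub_bidisk : unit_ball2 R `<=` bidisk R.
Proof.
move=> z z1; split; rewrite -(@expr_lt1 _ 2) //; apply: le_lt_trans z1.
  by rewrite lerDl exprn_ge0.
by rewrite lerDr exprn_ge0.
Qed.

End Phi.

Section UnitSquare.
Local Open Scope complex_scope.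
Variable R : realType.
Local Notation C := (Cplx R).

Lemma norm_real_complex (x : R) : `|x%:C| = `|x|%:C :> C.
Proof. by rewrite normc_def /= expr0n /= addr0 sqrtr_sqr. Qed.

Lemma real_complex_continuous : continuous (fun x : R => x%:C : C).
Proof.
move=> x; apply/cvgrPdist_lt => e e0.
have eE : e = (complex.Re e)%:C.
  by rewrite [LHS]complexE (ger0_Im (ltW e0)) mulr0 addr0.
have Re_e0 : 0 < complex.Re e by rewrite -ltcR -eE.
near=> y; rewrite -rmorphB norm_real_complex eE ltcR.
by near: y; apply: (@cvgr_dist_lt _ _ _ _ _ id).
Unshelve. all: by end_near.
Qed.

Definition of_coords (p : R * R) : C := p.1%:C + 'i * p.2%:C.

Lemma of_coords_continuous : continuous of_coords.
Proof.
move=> p.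
have fst_cont : {for p, continuous (@fst R R)} by apply: cvg_fst.
have snd_cont : {for p, continuous (@snd R R)} by apply: cvg_snd.
apply: cvgD; first exact: (continuous_comp fst_cont (@real_complex_continuous _)).
apply: cvgM; first exact: cvg_cst.
exact: (continuous_comp snd_cont (@real_complex_continuous _)).
Qed.

Definition unit_square : set C :=
  of_coords @` (closed_ball (0 : R) 1 `*` closed_ball (0 : R) 1).

Lemma unit_square_compact : compact unit_square.
Proof.
apply: continuous_compact.
  by apply: continuous_subspaceT => x; apply: of_coords_continuous.
by apply: compact_setX; apply: closed_ballR_compact.
Qed.

Lemma disk_sub_unit_square (z : C) : `|z| < 1 -> unit_square z.
Proof.
move=> z1; exists (complex.Re z, complex.Im z); last by rewrite /of_coords -complexE.
have Im_le : `|complex.Im z|%:C <= `|z| :> C.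
  rewrite normc_def lecR -sqrtr_sqr; apply: ler_wsqrtr.
  by rewrite lerDr sqr_ge0.
split; rewrite closed_ballE //= /closed_ball_ /= distrC subr0 -(@lecR R).
  by rewrite (le_trans (normc_ge_Re z)) // ltW.
by rewrite (le_trans Im_le) // ltW.
Qed.

Lemma bidisk_sub_unit_square : bidisk R `<=` unit_square `*` unit_square.
Proof. by move=> z [z1 z2]; split; apply: disk_sub_unit_square. Qed.

Lemma compact_Phi_preimage (K : set (C * C)) : compact K ->
  Phi R @^-1` K `<=` unit_square `*` unit_square -> compact (Phi R @^-1` K).
Proof.
move=> Kc sub; apply: subclosed_compact sub.
  apply: preimage_closed; first by move=> z _; apply: Phi_continuous.
  exact: (compact_closed (@norm_hausdorff _ _) Kc).
exact: compact_setX unit_square_compact unit_square_compact.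
Qed.

End UnitSquare.

Lemma Phi_saturated (R : realType) (Omega : set (Cplx R * Cplx R)) z w :
  Omega = bidisk R \/ Omega = unit_ball2 R ->
  Phi R z = Phi R w -> Omega w -> Omega z.
Proof.
case=> -> /Phi_eq_norm; rewrite /bidisk /unit_ball2 /= => -[] [-> ->] //.
  by case.
by rewrite addrC.
Qed.

Theorem proposition6p2 (R : realType) (Omega : set (Cplx R * Cplx R)) :
  Omega = bidisk R \/ Omega = unit_ball2 R ->
  open (Phi R @` Omega) /\
  holomorphic_on R Omega (Phi R) /\
  proper_map R Omega (Phi R @` Omega) (Phi R).
Proof.
move=> hOm.
have Omega_open : open Omega.
  by case: hOm => ->; [exact: bidisk_open | exact: unit_ball2_open].
have Omega_sub : Omega `<=` unit_square R `*` unit_square R.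
  case: hOm => ->; first exact: bidisk_sub_unit_square.
  exact: subset_trans (@unit_ball2_sub_bidisk R) (bidisk_sub_unit_square R).
have preimage_sub K : K `<=` Phi R @` Omega -> Phi R @^-1` K `<=` Omega.
  by move=> KO z /KO [w Ow wz]; apply: Phi_saturated hOm (esym wz) Ow.
split; first exact: open_Phi_image.
split; first by move=> z _; apply: Phi_differentiable.
split=> [z Oz|K KO Kc]; first by exists z.
rewrite setIidr; last exact: preimage_sub.
apply: compact_Phi_preimage Kc _.
exact: subset_trans (preimage_sub K KO) Omega_sub.
Qed.
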